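(* Let $j_1\ge0$ and let $J\ge j_1$ be an integer with $J\equiv j_1\pmod 2$. Then $$\sum_{\substack{j_2,j_3\ge0,\ j_2+j_3=J\\ (j_1,j_2,j_3)\in\mathbf J}}\phi_{j_1,j_2,j_3}(x_{12},x_{13},1)=\frac{\left(1-x_{13}^{j_1+1}x_{12}^{-j_1-1}\right)\left(1-x_{13}^{j_1+1}x_{12}^{j_1+1}\right)}{(j_1+1)\,x_{13}^{j_1}\,(1-x_{13}/x_{12})(1-x_{13}x_{12})}.$$
   Context: A triple $(j_1,j_2,j_3)$ of nonnegative integers is admissible if $|j_1-j_2|\le j_3\le j_1+j_2$ and $j_1+j_2+j_3$ is even; $\mathbf J$ denotes the set of admissible triples. Let $\mathcal H=\mathbb C[x_{12}+x_{12}^{-1},x_{13}+x_{13}^{-1},x_{23}+x_{23}^{-1}]\subset\mathbb C[x_{12}^{\pm1},x_{13}^{\pm1},x_{23}^{\pm1}]$. For $a,b\in\{\pm1\}$ set $K_{a,b}(j_1,j_2,j_3)=ab\,\frac{(aj_1+bj_2+j_3+a+b+2)(aj_1+bj_2-j_3+a+b)}{4(j_1+1)(j_2+1)}$. The genus two Schur polynomials $(\phi_{j_1,j_2,j_3})_{(j_1,j_2,j_3)\in\mathbf J}$ are the unique family in $\mathcal H$ with $\phi_{0,0,0}=1$ such that for all admissible $(j_1,j_2,j_3)$: $(x_{12}+x_{12}^{-1})\phi_{j_1,j_2,j_3}=\sum_{a,b\in\{\pm1\}}K_{a,b}(j_1,j_2,j_3)\phi_{j_1+a,j_2+b,j_3}$,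 $(x_{13}+x_{13}^{-1})\phi_{j_1,j_2,j_3}=\sum_{a,b\in\{\pm1\}}K_{a,b}(j_1,j_3,j_2)\phi_{j_1+a,j_2,j_3+b}$, $(x_{23}+x_{23}^{-1})\phi_{j_1,j_2,j_3}=\sum_{a,b\in\{\pm1\}}K_{a,b}(j_2,j_3,j_1)\phi_{j_1,j_2+a,j_3+b}$, where $\phi$ of a non-admissible triple is interpreted as $0$. *)

From HB Require Import structures.
From mathcomp Require Import all_boot all_order all_algebra all_field.
From mathcomp.multinomials Require Import mpoly.
Set Implicit Arguments. Unset Strict Implicit. Unset Printing Implicit Defensive.
Import Order.TTheory GRing.Theory Num.Theory.
Local Open Scope ring_scope.

(* The ring H = C[x12+1/x12, x13+1/x13, x23+1/x23] is modelled as the polynomial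
   ring {mpoly algC[3]} in the (algebraically independent) generators
   y12 = 'X_i0, y13 = 'X_i1, y23 = 'X_i2, where y_ab stands for x_ab + x_ab^{-1}. *)
Definition i0 : 'I_3 := @Ordinal 3 0 isT.
Definition i1 : 'I_3 := @Ordinal 3 1 isT.
Definition i2 : 'I_3 := @Ordinal 3 2 isT.

Definition Hpoly := {mpoly algC[3]}.

Definition admissible (j1 j2 j3 : nat) : bool :=
  [&& (j1 - j2 <= j3)%N, (j2 - j1 <= j3)%N, (j3 <= j1 + j2)%N & ~~ odd (j1 + j2 + j3)].

Definition sgnb (a : bool) : int := if a then 1 else -1.

Definition Kc (ba bb : bool) (j1 j2 j3 : nat) : algC :=
  let a : algC := (sgnb ba)%:~R in
  let b : algC := (sgnb bb)%:~R in
  a * b * ((a * j1%:R + b * j2%:R + j3%:R + a + b + 2)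
           * (a * j1%:R + b * j2%:R - j3%:R + a + b))
  / (4 * (j1.+1)%:R * (j2.+1)%:R).

Definition phiZ (phi : nat -> nat -> nat -> Hpoly) (i j k : int) : Hpoly :=
  match i, j, k with
  | Posz a, Posz b, Posz c => if admissible a b c then phi a b c else 0
  | _, _, _ => 0
  end.

Definition is_genus2_schur (phi : nat -> nat -> nat -> Hpoly) : Prop :=
  phi 0%N 0%N 0%N = 1 /\
  forall j1 j2 j3 : nat, admissible j1 j2 j3 ->
    [/\ 'X_i0 * phi j1 j2 j3 =
          \sum_(a : bool) \sum_(b : bool)
             Kc a b j1 j2 j3 *: phiZ phi (j1%:Z + sgnb a) (j2%:Z + sgnb b) j3%:Z,
        'X_i1 * phi j1 j2 j3 =
          \sum_(a : bool) \sum_(b : bool)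
             Kc a b j1 j3 j2 *: phiZ phi (j1%:Z + sgnb a) j2%:Z (j3%:Z + sgnb b)
      & 'X_i2 * phi j1 j2 j3 =
          \sum_(a : bool) \sum_(b : bool)
             Kc a b j2 j3 j1 *: phiZ phi j1%:Z (j2%:Z + sgnb a) (j3%:Z + sgnb b)].

Definition evalH (p : Hpoly) (x12 x13 x23 : algC) : algC :=
  p.@[ fun i : 'I_3 =>
         if i == i0 then x12 + x12^-1 else if i == i1 then x13 + x13^-1
         else x23 + x23^-1 ].

From HB Require Import structures.
From mathcomp Require Import all_boot all_order all_algebra all_field.
From mathcomp.multinomials Require Import mpoly.
From mathcomp Require Import ring zify.
Import Order.TTheory GRing.Theory Num.Theory.
Local Open Scope ring_scope.

(* Write the admissible triples as (k + r, s + k, s + r) with s, k, r >= 0; the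
   terms of the sum are then the layer s = (J - j1) / 2, 0 <= k <= j1.  At x23 = 1
   the x23-recurrence, summed over a layer, becomes a three-term recurrence in s
   whose solutions are constant, so the layer sum does not depend on J.  On the
   bottom layer s = 0, the x12- and x13-recurrences, summed with suitable weights,
   close up into a second-order recurrence in j1 for the pair (layer sum, first
   moment of the layer).  The quotient
     (T_(j1+1)(x12) - T_(j1+1)(x13)) / ((j1 + 1) (T_1(x12) - T_1(x13))),
   T_n(x) = x^n + x^-n ([powsym]), together with a matching moment, satisfies the same
   recurrence and initial conditions, and it factors as the stated formula. *)

Lemma big_ord_recl0 {V : zmodType} (F : nat -> V) n :
  F 0%N = 0 -> \sum_(k < n.+1) F k = \sum_(k < n) F k.+1.
Proof. by move=> F0; rewrite big_ord_recl /= F0 add0r. Qed.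

Lemma big_ord_recr0 {V : zmodType} (F : nat -> V) n :
  F n = 0 -> \sum_(k < n.+1) F k = \sum_(k < n) F k.
Proof. by move=> Fn; rewrite big_ord_recr /= Fn addr0. Qed.

Lemma big_ord_shift {V : zmodType} (F : nat -> V) n :
  F 0%N = 0 -> F n.+1 = 0 -> \sum_(k < n.+1) F k.+1 = \sum_(k < n.+1) F k.
Proof. by move=> F0 Fn; rewrite (big_ord_recr0 (fun k => F k.+1)) // big_ord_recl0. Qed.

Lemma natr_addr_neq0 {R : numDomainType} (a : R) n : 0 < a -> a + n%:R != 0.
Proof. by move=> a_gt0; rewrite lt0r_neq0 // ltr_wpDr. Qed.

Lemma eq_from_lincomb1 {R : comPzRingType} (x y a b k : R) :
  a = b -> x - y = k * (a - b) -> x = y.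
Proof. by move=> -> e; apply/eqP; rewrite -subr_eq0 e subrr mulr0. Qed.

Lemma eq_from_lincomb2 {R : comPzRingType} (x y a b c d k1 k2 : R) :
  a = b -> c = d -> x - y = k1 * (a - b) + k2 * (c - d) -> x = y.
Proof. by move=> -> -> e; apply/eqP; rewrite -subr_eq0 e !subrr !mulr0 add0r. Qed.

Lemma eq_const_three_term {R : idomainType} (f a b : nat -> R) :
  (forall s, a s != 0) ->
  (forall s, (a s + b s) * f s = a s * f s.+1 + b s * f s.-1) ->
  forall s, f s = f 0%N.
Proof.
move=> a_neq0 rec.
have step s : f s.-1 = f s -> f s.+1 = f s.
  move=> e; apply: (mulfI (a_neq0 s)); apply: (addIr (b s * f s)).
  by have := rec s; rewrite e => <-; rewrite mulrDl.
have succ s : f s.+1 = f s by elim: s => [|s IH]; apply: step => //; rewrite IH.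
by elim=> // s IH; rewrite succ.
Qed.

(* The two recurrences that the x12- and x13-relations impose on the sum [L j] and
   the first moment [M j] of the bottom layer j2 + j3 = j1 = j, for y1 = x12 + 1/x12
   and y2 = x13 + 1/x13. *)
Definition boundary_rec {R : numFieldType} (y1 y2 : R) (L M : nat -> R) :=
  forall n : nat,
    2 * (n.+3)%:R * L n.+2 =
      (n.+3)%:R * (y1 + y2) * L n.+1 + (y1 - y2) * M n.+1 - 2 * (n.+3)%:R * L n
 /\ 2 * (n.+3)%:R * (n.+2)%:R * M n.+2 =
      (n.+2)%:R ^+ 2 * ((n.+3)%:R * (y1 - y2) * L n.+1 + (y1 + y2) * M n.+1)
      + 2 * ((n.+4)%:R - (n.+2)%:R ^+ 2) * M n.

Lemma boundary_rec_unique {R : numFieldType} {y1 y2 : R} {L M L' M' : nat -> R} :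
  boundary_rec y1 y2 L M -> boundary_rec y1 y2 L' M' ->
  L 0%N = L' 0%N -> L 1%N = L' 1%N -> M 0%N = M' 0%N -> M 1%N = M' 1%N -> L =1 L'.
Proof.
move=> rec rec' eL0 eL1 eM0 eM1.
suff H n : [/\ L n = L' n, L n.+1 = L' n.+1, M n = M' n & M n.+1 = M' n.+1].
  by move=> n; case: (H n).
elim: n => [|n [IL0 IL1 IM0 IM1]]; first by split.
have [rL rM] := rec n; have [rL' rM'] := rec' n.
have c2 : 2 != 0 :> R by rewrite pnatr_eq0.
have c3 : (n.+3)%:R != 0 :> R by rewrite pnatr_eq0.
have c4 : (n.+2)%:R != 0 :> R by rewrite pnatr_eq0.
split=> //.
- by apply: (mulfI (mulf_neq0 c2 c3)); rewrite rL rL' IL0 IL1 IM1.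
- by apply: (mulfI (mulf_neq0 (mulf_neq0 c2 c3) c4)); rewrite rM rM' IL1 IM0 IM1.
Qed.

Section Layers.

Context {R : numFieldType} (g : int -> int -> int -> R).

(* [g s k r] stands for phi at the triple (k + r, s + k, s + r), evaluated at
   x23 = 1; [y] is the value of x12 + 1/x12 (resp. x13 + 1/x13). *)
Definition rec12 (y : R) := forall s k r : nat,
  y * g s k r * ((k + r + 1)%:R * (s + k + 1)%:R) =
    (s + k + r + 2)%:R * (k + 1)%:R * g s (k%:Z + 1) r
  + (r + 1)%:R * s%:R * g (s%:Z - 1) k (r%:Z + 1)
  + (s + 1)%:R * r%:R * g (s%:Z + 1) k (r%:Z - 1)
  + k%:R * (s + k + r + 1)%:R * g s (k%:Z - 1) r.

Definition rec13 (y : R) := forall s k r : nat,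
  y * g s k r * ((k + r + 1)%:R * (s + r + 1)%:R) =
    (s + k + r + 2)%:R * (r + 1)%:R * g s k (r%:Z + 1)
  + (k + 1)%:R * s%:R * g (s%:Z - 1) (k%:Z + 1) r
  + (s + 1)%:R * k%:R * g (s%:Z + 1) (k%:Z - 1) r
  + r%:R * (s + k + r + 1)%:R * g s k (r%:Z - 1).

Definition rec23 := forall s k r : nat,
  2 * g s k r * ((s + k + 1)%:R * (s + r + 1)%:R) =
    (s + k + r + 2)%:R * (s + 1)%:R * g (s%:Z + 1) k r
  + (k + 1)%:R * r%:R * g s (k%:Z + 1) (r%:Z - 1)
  + (r + 1)%:R * k%:R * g s (k%:Z - 1) (r%:Z + 1)
  + s%:R * (s + k + r + 1)%:R * g (s%:Z - 1) k r.

Definition layer_wsum (w : nat -> R) (j : nat) (s : int) :=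
  \sum_(k < j.+1) w k * g s k (j%:Z - k%:Z).

Definition layer_sum := layer_wsum (fun=> 1).

Definition layer_moment (j : nat) := layer_wsum (fun k => 2 * k%:R - j%:R) j.

Lemma layer_sumE j s : layer_sum j s = \sum_(k < j.+1) g s k (j%:Z - k%:Z).
Proof. by apply: eq_bigr => k _; rewrite mul1r. Qed.

Lemma layer_momentE j s :
  layer_moment j s = \sum_(k < j.+1) (2 * k%:R - j%:R) * g s k (j%:Z - k%:Z).
Proof. by []. Qed.

Lemma layer_wsum_affine (a b : R) (w : nat -> R) j s :
  (forall k, 2 * w k = a + b * (2 * k%:R - j%:R)) ->
  layer_wsum w j s = (a * layer_sum j s + b * layer_moment j s) / 2.
Proof.
move=> ew; rewrite /layer_sum /layer_moment /layer_wsum !mulr_sumr -big_split /=.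
rewrite mulr_suml; apply: eq_bigr => k _.
by apply: (eq_from_lincomb1 _ _ _ _ (g s k (j%:Z - k%:Z) / 2) (ew k)); field.
Qed.

Lemma layer_shift_up (w : nat -> R) j s :
  \sum_(k < j.+1) w k.+1 * ((k + 1)%:R * (j%:R - k%:R)) * g s k.+1 (j%:Z - k.+1%:Z) =
  \sum_(k < j.+1) w k * (k%:R * (j%:R - k%:R + 1)) * g s k (j%:Z - k%:Z).
Proof.
rewrite -(big_ord_shift (fun k => w k * (k%:R * (j%:R - k%:R + 1)) * g s k (j%:Z - k%:Z))).
- by apply: eq_bigr => k _; ring.
- by rewrite mul0r mulr0 mul0r.
- by rewrite (_ : j%:R - j.+1%:R + 1 = 0) ?mulr0 ?mul0r //; ring.
Qed.

Lemma layer_shift_down (w : nat -> R) j s :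
  \sum_(k < j.+1) w k * (k%:R * (j%:R - k%:R + 1)) * g s (k%:Z - 1) (j%:Z - (k%:Z - 1)) =
  \sum_(k < j.+1) w k.+1 * ((k + 1)%:R * (j%:R - k%:R)) * g s k (j%:Z - k%:Z).
Proof.
rewrite -(big_ord_shift (fun k => w k * (k%:R * (j%:R - k%:R + 1)) * g s (k%:Z - 1) (j%:Z - (k%:Z - 1)))).
- apply: eq_bigr => k _; rewrite (_ : k.+1%:Z - 1 = k); last by lia.
  by ring.
- by rewrite mul0r mulr0 mul0r.
- by rewrite (_ : j%:R - j.+1%:R + 1 = 0) ?mulr0 ?mul0r //; ring.
Qed.

Section Rec23.

Hypothesis grec23 : rec23.

Lemma rec23_layer (s j k : nat) : (k <= j)%N ->
  2 * g s k (j%:Z - k%:Z) * ((s + k + 1)%:R * ((s + j + 1)%:R - k%:R)) =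
    (s + j + 2)%:R * (s + 1)%:R * g (s%:Z + 1) k (j%:Z - k%:Z)
  + (k + 1)%:R * (j%:R - k%:R) * g s k.+1 (j%:Z - k.+1%:Z)
  + (j%:R - k%:R + 1) * k%:R * g s (k%:Z - 1) (j%:Z - (k%:Z - 1))
  + s%:R * (s + j + 1)%:R * g (s%:Z - 1) k (j%:Z - k%:Z).
Proof.
move=> /subnKC <-; move: (j - k)%N => i.
have -> : (k + i)%N%:Z - k%:Z = i by lia.
have -> : (k + i)%N%:Z - k.+1%:Z = i%:Z - 1 by lia.
have -> : (k + i)%N%:Z - (k%:Z - 1) = i%:Z + 1 by lia.
have := grec23 s k i; rewrite (_ : k%:Z + 1 = k.+1); last by lia.
by move=> e; apply: etrans (etrans _ e) _; ring.
Qed.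

Lemma layer_sum_rec (j s : nat) :
  ((s + 1)%:R * (s + j + 2)%:R + s%:R * (s + j + 1)%:R) * layer_sum j s =
    (s + 1)%:R * (s + j + 2)%:R * layer_sum j (s%:Z + 1)
  + s%:R * (s + j + 1)%:R * layer_sum j (s%:Z - 1).
Proof.
have E : \sum_(k < j.+1) 2 * g s k (j%:Z - k%:Z) * ((s + k + 1)%:R * ((s + j + 1)%:R - k%:R)) =
  \sum_(k < j.+1) ((s + j + 2)%:R * (s + 1)%:R * g (s%:Z + 1) k (j%:Z - k%:Z)
    + 1 * ((k + 1)%:R * (j%:R - k%:R)) * g s k.+1 (j%:Z - k.+1%:Z)
    + 1 * (k%:R * (j%:R - k%:R + 1)) * g s (k%:Z - 1) (j%:Z - (k%:Z - 1))
    + s%:R * (s + j + 1)%:R * g (s%:Z - 1) k (j%:Z - k%:Z)).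
  by apply: eq_bigr => k _; rewrite rec23_layer; [ring | rewrite -ltnS].
move: E; rewrite !big_split /= -!mulr_sumr -!layer_sumE.
rewrite (layer_shift_up (fun=> 1)) (layer_shift_down (fun=> 1)) => E.
(* After the index shifts, the coefficient of [g s k (j - k)] no longer depends on k. *)
have -> : ((s + 1)%:R * (s + j + 2)%:R + s%:R * (s + j + 1)%:R) * layer_sum j s =
    \sum_(k < j.+1) 2 * g s k (j%:Z - k%:Z) * ((s + k + 1)%:R * ((s + j + 1)%:R - k%:R))
  - \sum_(k < j.+1) 1 * (k%:R * (j%:R - k%:R + 1)) * g s k (j%:Z - k%:Z)
  - \sum_(k < j.+1) 1 * ((k + 1)%:R * (j%:R - k%:R)) * g s k (j%:Z - k%:Z).
  by rewrite layer_sumE mulr_sumr -!sumrB; apply: eq_bigr => k _; ring.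
by rewrite E; ring.
Qed.

Lemma layer_moment_rec (j s : nat) :
  ((s + 1)%:R * (s + j + 2)%:R + s%:R * (s + j + 1)%:R + 2) * layer_moment j s =
    (s + 1)%:R * (s + j + 2)%:R * layer_moment j (s%:Z + 1)
  + s%:R * (s + j + 1)%:R * layer_moment j (s%:Z - 1).
Proof.
have E : \sum_(k < j.+1) (2 * k%:R - j%:R) *
      (2 * g s k (j%:Z - k%:Z) * ((s + k + 1)%:R * ((s + j + 1)%:R - k%:R))) =
  \sum_(k < j.+1) ((s + 1)%:R * (s + j + 2)%:R * ((2 * k%:R - j%:R) * g (s%:Z + 1) k (j%:Z - k%:Z))
    + (2 * k.+1%:R - 2 - j%:R) * ((k + 1)%:R * (j%:R - k%:R)) * g s k.+1 (j%:Z - k.+1%:Z)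
    + (2 * k%:R - j%:R) * (k%:R * (j%:R - k%:R + 1)) * g s (k%:Z - 1) (j%:Z - (k%:Z - 1))
    + s%:R * (s + j + 1)%:R * ((2 * k%:R - j%:R) * g (s%:Z - 1) k (j%:Z - k%:Z))).
  by apply: eq_bigr => k _; rewrite rec23_layer; [ring | rewrite -ltnS].
move: E; rewrite !big_split /= -!mulr_sumr -!layer_momentE.
rewrite (layer_shift_up (fun k => 2 * k%:R - 2 - j%:R)).
rewrite (layer_shift_down (fun k => 2 * k%:R - j%:R)) => E.
have -> : ((s + 1)%:R * (s + j + 2)%:R + s%:R * (s + j + 1)%:R + 2) * layer_moment j s =
    \sum_(k < j.+1) (2 * k%:R - j%:R) *
      (2 * g s k (j%:Z - k%:Z) * ((s + k + 1)%:R * ((s + j + 1)%:R - k%:R)))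
  - \sum_(k < j.+1) (2 * k%:R - 2 - j%:R) * (k%:R * (j%:R - k%:R + 1)) * g s k (j%:Z - k%:Z)
  - \sum_(k < j.+1) (2 * k.+1%:R - j%:R) * ((k + 1)%:R * (j%:R - k%:R)) * g s k (j%:Z - k%:Z).
  by rewrite layer_momentE mulr_sumr -!sumrB; apply: eq_bigr => k _; ring.
by rewrite E; ring.
Qed.

Lemma layer_sum_const j (s : nat) : layer_sum j s = layer_sum j 0.
Proof.
apply: (eq_const_three_term (fun s : nat => layer_sum j s)
  (fun s => (s + 1)%:R * (s + j + 2)%:R) (fun s => s%:R * (s + j + 1)%:R)) => s'.
  by apply: mulf_neq0; rewrite ?addn1 ?addn2 pnatr_eq0.
have := layer_sum_rec j s'; rewrite (_ : s'%:Z + 1 = s'.+1); last by lia.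
case: s' => [|s'] -> /=; first by rewrite !mul0r.
by rewrite (_ : s'.+1%:Z - 1 = s'); last by lia.
Qed.

End Rec23.

Lemma rec12_boundary y (h : rec12 y) (n k : nat) : (k <= n.+1)%N ->
  (n.+2)%:R * y * ((k + 1)%:R * g 0 k (n.+1%:Z - k%:Z)) =
    (n.+3)%:R * (k.+1%:R * g 0 k.+1 (n.+2%:Z - k.+1%:Z))
  + (n.+1%:R - k%:R) * g 1 k (n%:Z - k%:Z)
  + (n.+2)%:R * (k%:R * g 0 (k%:Z - 1) (n%:Z - (k%:Z - 1))).
Proof.
move=> kn; have [i e] : exists i, n.+1 = (k + i)%N by exists (n.+1 - k)%N; lia.
have -> : n.+1%:Z - k%:Z = i by lia.
have -> : n.+2%:Z - k.+1%:Z = i by lia.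
have -> : n%:Z - k%:Z = i%:Z - 1 by lia.
have -> : n%:Z - (k%:Z - 1) = i by lia.
rewrite e; move: (h 0%N k i).
have -> : k%:Z + 1 = k.+1 by lia.
have -> : 0%:Z + 1 = 1 by [].
by move=> H; apply: etrans (etrans _ H) _; ring.
Qed.

Lemma rec13_boundary y (h : rec13 y) (n k : nat) : (k <= n.+1)%N ->
  (n.+2)%:R * y * ((n.+2%:R - k%:R) * g 0 k (n.+1%:Z - k%:Z)) =
    (n.+3)%:R * ((n.+2%:R - k%:R) * g 0 k (n.+2%:Z - k%:Z))
  + k%:R * g 1 (k%:Z - 1) (n%:Z - (k%:Z - 1))
  + (n.+2)%:R * ((n.+1%:R - k%:R) * g 0 k (n%:Z - k%:Z)).
Proof.
move=> kn; have [i e] : exists i, n.+1 = (k + i)%N by exists (n.+1 - k)%N; lia.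
have -> : n.+1%:Z - k%:Z = i by lia.
have -> : n.+2%:Z - k%:Z = i%:Z + 1 by lia.
have -> : n%:Z - (k%:Z - 1) = i by lia.
have -> : n%:Z - k%:Z = i%:Z - 1 by lia.
rewrite e; move: (h 0%N k i).
have -> : 0%:Z + 1 = 1 by [].
by move=> H; apply: etrans (etrans _ H) _; ring.
Qed.

Lemma boundary_wsum12 {y} (h : rec12 y) (n : nat) :
  (n.+2)%:R * y * layer_wsum (fun k => (k + 1)%:R) n.+1 0 =
    (n.+3)%:R * layer_wsum (fun k => k%:R) n.+2 0
  + layer_wsum (fun k => n.+1%:R - k%:R) n 1
  + (n.+2)%:R * layer_wsum (fun k => (k + 1)%:R) n 0.
Proof.
rewrite /layer_wsum mulr_sumr.
under eq_bigr => k _ do rewrite rec12_boundary -1?ltnS //.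
rewrite !big_split /= -!mulr_sumr; congr (_ * _ + _ + _ * _).
- by rewrite (big_ord_recl0 (fun k => k%:R * g 0 k (n.+2%:Z - k%:Z))) //= mul0r.
- by rewrite (big_ord_recr0 (fun k => (n.+1%:R - k%:R) * g 1 k (n%:Z - k%:Z))) //=; ring.
- rewrite (big_ord_recl0 (fun k => k%:R * g 0 (k%:Z - 1) (n%:Z - (k%:Z - 1)))) /=;
    last by rewrite mul0r.
  apply: eq_bigr => k _; rewrite addn1 (_ : k.+1%:Z - 1 = k) //; lia.
Qed.

Lemma boundary_wsum13 {y} (h : rec13 y) (n : nat) :
  (n.+2)%:R * y * layer_wsum (fun k => n.+2%:R - k%:R) n.+1 0 =
    (n.+3)%:R * layer_wsum (fun k => n.+2%:R - k%:R) n.+2 0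
  + layer_wsum (fun k => (k + 1)%:R) n 1
  + (n.+2)%:R * layer_wsum (fun k => n.+1%:R - k%:R) n 0.
Proof.
rewrite /layer_wsum mulr_sumr.
under eq_bigr => k _ do rewrite rec13_boundary -1?ltnS //.
rewrite !big_split /= -!mulr_sumr; congr (_ * _ + _ + _ * _).
- by rewrite [RHS](big_ord_recr0 (fun k => (n.+2%:R - k%:R) * g 0 k (n.+2%:Z - k%:Z))) //=; ring.
- rewrite (big_ord_recl0 (fun k => k%:R * g 1 (k%:Z - 1) (n%:Z - (k%:Z - 1)))) /=;
    last by rewrite mul0r.
  apply: eq_bigr => k _; rewrite addn1 (_ : k.+1%:Z - 1 = k) //; lia.
- by rewrite (big_ord_recr0 (fun k => (n.+1%:R - k%:R) * g 0 k (n%:Z - k%:Z))) //=; ring.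
Qed.

Lemma layer_boundary_rec {y1 y2} : rec12 y1 -> rec13 y2 -> rec23 ->
  boundary_rec y1 y2 (layer_sum ^~ 0) (layer_moment ^~ 0).
Proof.
move=> h12 h13 h23 n.
have hL1 : layer_sum n 1 = layer_sum n 0 := layer_sum_const h23 n 1.
have hM1 : layer_moment n 1 = (n.+4)%:R / (n.+2)%:R * layer_moment n 0.
  move: (layer_moment_rec h23 n 0); have -> : 0%:Z + 1 = 1 by [].
  move=> e; apply: (eq_from_lincomb1 _ _ _ _ (- (n.+2)%:R^-1) e).
  by field; rewrite natr_addr_neq0.
have b12 := boundary_wsum12 h12 n; have b13 := boundary_wsum13 h13 n.
rewrite (layer_wsum_affine (n.+3)%:R 1 (fun k => (k + 1)%:R) n.+1)
  ?(layer_wsum_affine (n.+2)%:R 1 (fun k => k%:R) n.+2)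
  ?(layer_wsum_affine (n.+2)%:R (-1) (fun k => n.+1%:R - k%:R) n)
  ?(layer_wsum_affine (n.+2)%:R 1 (fun k => (k + 1)%:R) n) ?hL1 ?hM1 in b12;
  try by move=> k; ring.
rewrite (layer_wsum_affine (n.+3)%:R (-1) (fun k => n.+2%:R - k%:R) n.+1)
  ?(layer_wsum_affine (n.+2)%:R (-1) (fun k => n.+2%:R - k%:R) n.+2)
  ?(layer_wsum_affine (n.+2)%:R 1 (fun k => (k + 1)%:R) n)
  ?(layer_wsum_affine (n.+2)%:R (-1) (fun k => n.+1%:R - k%:R) n) ?hL1 ?hM1 in b13;
  try by move=> k; ring.
(* The sum, resp. the difference, of the two boundary identities. *)
split.
- apply: (eq_from_lincomb2 _ _ _ _ _ _ (- (2 / (n.+2)%:R)) (- (2 / (n.+2)%:R)) b12 b13).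
  by field; rewrite natr_addr_neq0.
- apply: (eq_from_lincomb2 _ _ _ _ _ _ (- (2 * (n.+2)%:R)) (2 * (n.+2)%:R) b12 b13).
  by field; rewrite natr_addr_neq0.
Qed.

Lemma layer_init {y1 y2} : rec12 y1 -> rec13 y2 -> g 0 0 0 = 1 ->
  [/\ layer_sum 0 0 = 1, layer_sum 1 0 = (y1 + y2) / 2,
      layer_moment 0 0 = 0 & layer_moment 1 0 = (y1 - y2) / 2].
Proof.
move=> h12 h13 g0.
have e010 : g 0 1 0 = y1 / 2.
  move: (h12 0%N 0%N 0%N); rewrite g0 (_ : 0%:Z + 1 = 1) // => e.
  by apply: (eq_from_lincomb1 _ _ _ _ (- 2^-1) e); field.
have e001 : g 0 0 1 = y2 / 2.
  move: (h13 0%N 0%N 0%N); rewrite g0 (_ : 0%:Z + 1 = 1) // => e.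
  by apply: (eq_from_lincomb1 _ _ _ _ (- 2^-1) e); field.
rewrite !layer_sumE !layer_momentE !big_ord_recr !big_ord0 /= !subrr !subr0 g0 e001 e010.
by split; field.
Qed.

End Layers.

Definition powsym {R : fieldType} (x : R) (n : nat) := x ^+ n + (x ^+ n)^-1.

Lemma powsym0 {R : fieldType} (x : R) : powsym x 0 = 2.
Proof. by rewrite /powsym expr0 invr1. Qed.

Lemma powsym1 {R : fieldType} (x : R) : powsym x 1 = x + x^-1.
Proof. by rewrite /powsym expr1. Qed.

Lemma powsymSS {R : fieldType} (x : R) n : x != 0 ->
  powsym x n.+2 = powsym x 1 * powsym x n.+1 - powsym x n.
Proof.
move=> x0; rewrite /powsym !exprS expr0 mulr1.
by field; rewrite x0 expf_neq0.
Qed.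

Lemma powsym1_neq {R : fieldType} {t u : R} :
  t != 0 -> u != 0 -> u != t -> u * t != 1 -> powsym t 1 != powsym u 1.
Proof.
move=> t0 u0 ut ut1; rewrite !powsym1 -subr_eq0.
have -> : t + t^-1 - (u + u^-1) = (t - u) * (u * t - 1) / (t * u) by field; rewrite t0 u0.
apply: mulf_neq0; last by rewrite invr_eq0 mulf_neq0.
by rewrite mulf_neq0 // subr_eq0 // eq_sym.
Qed.

Section ClosedForm.

Context {R : numFieldType} (t u : R).

Definition layer_value (n : nat) :=
  (powsym t n - powsym u n) / (n%:R * (powsym t 1 - powsym u 1)).

(* Defined so that the first boundary recurrence holds; for n = 1 it involves
   [layer_value 0], which is 0 through the convention x / 0 = 0, matching the
   empty layer. *)
Definition moment_value (n : nat) :=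
  n.+1%:R * (2 * (layer_value n.+1 + layer_value n.-1)
             - (powsym t 1 + powsym u 1) * layer_value n)
  / (powsym t 1 - powsym u 1).

Lemma layer_value0 : layer_value 0 = 0.
Proof. by rewrite /layer_value mul0r invr0 mulr0. Qed.

Hypotheses (t0 : t != 0) (u0 : u != 0) (tu : powsym t 1 != powsym u 1).

Lemma layer_value_boundary_rec :
  boundary_rec (powsym t 1) (powsym u 1) (layer_value \o succn) (moment_value \o succn).
Proof.
have D0 : powsym t 1 - powsym u 1 != 0 by rewrite subr_eq0.
move=> n; split; first by rewrite /moment_value /=; field.
case: n => [|n]; rewrite /moment_value /= ?layer_value0 /layer_value !powsymSS // ?powsym0.
  by field; rewrite D0.
by field; rewrite D0 !natr_addr_neq0 ?ltr01.
Qed.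

Lemma layer_value_init :
  [/\ layer_value 1 = 1, layer_value 2 = (powsym t 1 + powsym u 1) / 2,
      moment_value 1 = 0 & moment_value 2 = (powsym t 1 - powsym u 1) / 2].
Proof.
have D0 : powsym t 1 - powsym u 1 != 0 by rewrite subr_eq0.
rewrite /moment_value /= layer_value0 /layer_value !powsymSS // !powsym0.
by split; field.
Qed.

End ClosedForm.

Lemma layer_value_factor {R : numFieldType} (t u : R) j :
  t != 0 -> u != 0 -> u != t -> u * t != 1 ->
  layer_value t u j.+1 = (1 - u ^+ j.+1 * t ^- j.+1) * (1 - u ^+ j.+1 * t ^+ j.+1)
    / (j.+1%:R * u ^+ j * (1 - u / t) * (1 - u * t)).
Proof.
move=> t0 u0 ut ut1.
rewrite /layer_value !powsym1 /powsym [u ^+ j.+1]exprS.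
have h1 : 1 - u * t != 0 by rewrite subr_eq0 eq_sym.
have h2 : t - u != 0 by rewrite subr_eq0 eq_sym.
have h3 : u * t - 1 != 0 by rewrite subr_eq0.
field.
rewrite (_ : (t * t + 1) * u + - (u * u + 1) * t = (t - u) * (u * t - 1)); last by ring.
by rewrite t0 u0 h1 h2 mulf_neq0 // !expf_neq0 // natr_addr_neq0 ?ltr01.
Qed.

Lemma layer_sum_value {R : numFieldType} {g : int -> int -> int -> R} {t u : R} :
  t != 0 -> u != 0 -> powsym t 1 != powsym u 1 ->
  rec12 g (powsym t 1) -> rec13 g (powsym u 1) -> rec23 g -> g 0 0 0 = 1 ->
  forall j, layer_sum g j 0 = layer_value t u j.+1.
Proof.
move=> t0 u0 tu h12 h13 h23 g0.
have [L0 L1 M0 M1] := layer_init g h12 h13 g0.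
have [V0 V1 W0 W1] := layer_value_init t u t0 u0 tu.
suff : layer_sum g ^~ 0 =1 layer_value t u \o succn by move=> E j; exact: E.
apply: (boundary_rec_unique (layer_boundary_rec g h12 h13 h23)
                            (layer_value_boundary_rec t u t0 u0 tu)) => /=.
- by rewrite L0 V0.
- by rewrite L1 V1.
- by rewrite M0 W0.
- by rewrite M1 W1.
Qed.

Definition phi_eval (phi : nat -> nat -> nat -> Hpoly) (t u : algC) (a b c : int) : algC :=
  evalH (phiZ phi a b c) t u 1.

Lemma phi_eval_rec {phi} t u {j1 j2 j3 : nat} :
  is_genus2_schur phi -> admissible j1 j2 j3 ->
  [/\ (t + t^-1) * phi_eval phi t u j1 j2 j3 =
        \sum_(a : bool) \sum_(b : bool)
          Kc a b j1 j2 j3 * phi_eval phi t u (j1%:Z + sgnb a) (j2%:Z + sgnb b) j3,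
      (u + u^-1) * phi_eval phi t u j1 j2 j3 =
        \sum_(a : bool) \sum_(b : bool)
          Kc a b j1 j3 j2 * phi_eval phi t u (j1%:Z + sgnb a) j2 (j3%:Z + sgnb b)
    & 2 * phi_eval phi t u j1 j2 j3 =
        \sum_(a : bool) \sum_(b : bool)
          Kc a b j2 j3 j1 * phi_eval phi t u j1 (j2%:Z + sgnb a) (j3%:Z + sgnb b)].
Proof.
move=> [_ rec] adm; have [e1 e2 e3] := rec _ _ _ adm.
have evalM (i : 'I_3) p : evalH ('X_i * p) t u 1 = evalH 'X_i t u 1 * evalH p t u 1.
  by rewrite /evalH mevalM.
have evalS (K : bool -> bool -> algC) (F : bool -> bool -> Hpoly) :
    evalH (\sum_(a : bool) \sum_(b : bool) K a b *: F a b) t u 1 =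
    \sum_(a : bool) \sum_(b : bool) K a b * evalH (F a b) t u 1.
  rewrite /evalH raddf_sum; apply: eq_bigr => a _.
  by rewrite raddf_sum; apply: eq_bigr => b _; exact: mevalZ.
have phiE : phi_eval phi t u j1 j2 j3 = evalH (phi j1 j2 j3) t u 1.
  by rewrite /phi_eval /= adm.
have X0 : evalH 'X_i0 t u 1 = t + t^-1 by rewrite /evalH mevalXU.
have X1 : evalH 'X_i1 t u 1 = u + u^-1 by rewrite /evalH mevalXU.
have X2 : evalH 'X_i2 t u 1 = 2 by rewrite /evalH mevalXU /= invr1.
by rewrite phiE -X0 -X1 -X2 -!evalM e1 e2 e3 !evalS.
Qed.

Lemma admissible_skr (s k r : nat) : admissible (k + r) (s + k) (s + r).
Proof.
rewrite /admissible (_ : k + r + (s + k) + (s + r) = 2 * (s + k + r))%N; last by lia.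
by rewrite oddM /=; apply/and3P; split; lia.
Qed.

Definition phi_skr phi t u (s k r : int) := phi_eval phi t u (k + r) (s + k) (s + r).

Lemma phi_eval_skr {phi t u} (s k r : int) {a b c : int} :
  a = k + r -> b = s + k -> c = s + r -> phi_eval phi t u a b c = phi_skr phi t u s k r.
Proof. by move=> -> -> ->. Qed.

Lemma phi_skr_rec12 phi t u : is_genus2_schur phi -> rec12 (phi_skr phi t u) (t + t^-1).
Proof.
move=> Hphi s k r; have [H _ _] := phi_eval_rec t u Hphi (admissible_skr s k r).
rewrite !big_bool /= in H.
rewrite (phi_eval_skr s k r) in H; try lia.
rewrite (phi_eval_skr s (k%:Z + 1) r) in H; try lia.
rewrite (phi_eval_skr (s%:Z - 1) k (r%:Z + 1)) in H; try lia.
rewrite (phi_eval_skr (s%:Z + 1) k (r%:Z - 1)) in H; try lia.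
rewrite (phi_eval_skr s (k%:Z - 1) r) in H; try lia.
by rewrite H /Kc /=; field; rewrite -!natrD !natr_addr_neq0 ?ltr01.
Qed.

Lemma phi_skr_rec13 phi t u : is_genus2_schur phi -> rec13 (phi_skr phi t u) (u + u^-1).
Proof.
move=> Hphi s k r; have [_ H _] := phi_eval_rec t u Hphi (admissible_skr s k r).
rewrite !big_bool /= in H.
rewrite (phi_eval_skr s k r) in H; try lia.
rewrite (phi_eval_skr s k (r%:Z + 1)) in H; try lia.
rewrite (phi_eval_skr (s%:Z - 1) (k%:Z + 1) r) in H; try lia.
rewrite (phi_eval_skr (s%:Z + 1) (k%:Z - 1) r) in H; try lia.
rewrite (phi_eval_skr s k (r%:Z - 1)) in H; try lia.
by rewrite H /Kc /=; field; rewrite -!natrD !natr_addr_neq0 ?ltr01.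
Qed.

Lemma phi_skr_rec23 phi t u : is_genus2_schur phi -> rec23 (phi_skr phi t u).
Proof.
move=> Hphi s k r; have [_ _ H] := phi_eval_rec t u Hphi (admissible_skr s k r).
rewrite !big_bool /= in H.
rewrite (phi_eval_skr s k r) in H; try lia.
rewrite (phi_eval_skr (s%:Z + 1) k r) in H; try lia.
rewrite (phi_eval_skr s (k%:Z + 1) (r%:Z - 1)) in H; try lia.
rewrite (phi_eval_skr s (k%:Z - 1) (r%:Z + 1)) in H; try lia.
rewrite (phi_eval_skr (s%:Z - 1) k r) in H; try lia.
by rewrite H /Kc /=; field; rewrite -!natrD !natr_addr_neq0 ?ltr01.
Qed.

Lemma phi_skr000 phi t u : is_genus2_schur phi -> phi_skr phi t u 0 0 0 = 1.
Proof. by case=> phi0 _; rewrite /phi_skr /phi_eval /= phi0 /evalH meval1. Qed.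

Lemma phi_eval_nadm phi t u (a b c : nat) : ~~ admissible a b c -> phi_eval phi t u a b c = 0.
Proof. by move=> /negbTE na; rewrite /phi_eval /= na /evalH meval0. Qed.

Lemma schur_layer_sum (phi : nat -> nat -> nat -> Hpoly) (t u : algC) (j1 s : nat) :
  \sum_(j2 < (j1 + 2 * s).+1 | admissible j1 j2 (j1 + 2 * s - j2))
     evalH (phi j1 j2 (j1 + 2 * s - j2)%N) t u 1 = layer_sum (phi_skr phi t u) j1 s.
Proof.
set J := (j1 + 2 * s)%N.
rewrite big_mkcond /=.
have -> : \sum_(j2 < J.+1) (if admissible j1 j2 (J - j2) then evalH (phi j1 j2 (J - j2)%N) t u 1 else 0)
    = \sum_(j2 < J.+1) phi_eval phi t u j1 j2 (J - j2)%N.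
  by apply: eq_bigr => j2 _; rewrite /phi_eval /=; case: ifP => // _; rewrite /evalH meval0.
rewrite -(big_mkord xpredT (fun j2 => phi_eval phi t u j1 j2 (J - j2)%N)).
rewrite (big_cat_nat _ (n := s)) //=; last by rewrite /J; lia.
rewrite (big_cat_nat _ (n := (s + j1.+1)%N) (m := s)) //=; last 2 first.
- by lia.
- by rewrite /J; lia.
rewrite big_nat_cond big1 => [|i /andP [/andP [_ ltis] _]]; last first.
  by apply: phi_eval_nadm; apply/negP => /and4P [_ _ h _]; rewrite /J in h; lia.
rewrite add0r [X in _ + X]big_nat_cond [X in _ + X]big1 ?addr0 => [|i /andP [/andP [lei ltiJ] _]]; last first.
  by apply: phi_eval_nadm; apply/negP => /and4P [_ h _ _]; rewrite /J in ltiJ h; lia.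
rewrite -{1}(add0n s) big_addn (_ : (s + j1.+1 - s = j1.+1)%N); last by lia.
rewrite big_mkord layer_sumE; apply: eq_bigr => k _.
by have := ltn_ord k; rewrite /phi_skr /J => ?; congr phi_eval; lia.
Qed.

Theorem mainTheorem15 (phi : nat -> nat -> nat -> Hpoly) (j1 J : nat)
  (x12 x13 : algC) :
  is_genus2_schur phi ->
  (j1 <= J)%N -> odd J = odd j1 ->
  x12 != 0 -> x13 != 0 -> x13 != x12 -> x13 * x12 != 1 ->
  \sum_(j2 < J.+1 | admissible j1 j2 (J - j2)%N) evalH (phi j1 j2 (J - j2)%N) x12 x13 1
  = (1 - x13 ^+ j1.+1 * x12 ^- j1.+1) * (1 - x13 ^+ j1.+1 * x12 ^+ j1.+1)
    / ((j1.+1)%:R * x13 ^+ j1 * (1 - x13 / x12) * (1 - x13 * x12)).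
Proof.
move=> Hphi le_j1J odd_J x12_0 x13_0 x13_x12 x13x12_1.
have [s ->] : exists s, J = (j1 + 2 * s)%N.
  exists ((J - j1)./2); have := odd_double_half (J - j1).
  by rewrite oddB // odd_J addbb add0n -muln2; lia.
set g := phi_skr phi x12 x13.
have h12 : rec12 g (powsym x12 1) by rewrite powsym1; exact: phi_skr_rec12.
have h13 : rec13 g (powsym x13 1) by rewrite powsym1; exact: phi_skr_rec13.
have h23 : rec23 g := phi_skr_rec23 phi x12 x13 Hphi.
have D : powsym x12 1 != powsym x13 1 := powsym1_neq x12_0 x13_0 x13_x12 x13x12_1.
rewrite schur_layer_sum -/g (layer_sum_const g h23).
rewrite (layer_sum_value x12_0 x13_0 D h12 h13 h23 (phi_skr000 phi x12 x13 Hphi)).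
exact: layer_value_factor.
Qed.
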